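(* If a billiard-like interval exchange transformation $f$ of $I=[-1,1)$ satisfies the modified Keane condition, then $f$ has no periodic points.
   Context: An interval exchange transformation of $I=[-1,1)$: a finite partition $\{I_\alpha\}_{\alpha\in\mathcal{A}}$ of $I$ into intervals closed on the left and open on the right ($|\mathcal{A}|\ge2$), and a bijection $f:I\to I$ whose restriction to each $I_\alpha$ is a translation. Let $p_\alpha$ be the left endpoint of $I_\alpha$. $f$ is billiard-like if: each $I_\alpha$ is contained in $[-1,0)$ or in $[0,1)$; each $f(I_\alpha)$ is contained in $[-1,0)$ or in $[0,1)$; and each of $[-1,0)$, $[0,1)$ contains at least two intervals of the partition. A billiard-like $f$ satisfies the modified Keane condition if $f^m(p_\alpha)\ne p_\beta$ for all $m\ge1$, all $\alpha\in\mathcal{A}$, and all $\beta\in\mathcal{A}$ with $p_\beta\notin\{-1,0\}$. *)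

From mathcomp Require Import all_boot.
From Stdlib Require Import Reals.
Open Scope R_scope.
Set Implicit Arguments.
Unset Strict Implicit.

Definition inI (x : R) : Prop := -1 <= x < 1.

Definition inCO (a b x : R) : Prop := a <= x < b.

Definition is_IET (A : finType) (p q t : A -> R) (f : R -> R) : Prop :=
  Nat.lt 1 #|A| /\
  (forall a : A, p a < q a) /\
  (forall a : A, -1 <= p a /\ q a <= 1) /\
  (forall x, inI x -> exists a : A, inCO (p a) (q a) x) /\
  (forall (a b : A) x, inCO (p a) (q a) x -> inCO (p b) (q b) x -> a = b) /\
  (forall (a : A) x, inCO (p a) (q a) x -> f x = x + t a) /\
  (forall x, inI x -> inI (f x)) /\
  (forall x y, inI x -> inI y -> f x = f y -> x = y) /\
  (forall y, inI y -> exists x, inI x /\ f x = y).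

Definition in_one_half (a b : R) : Prop :=
  (-1 <= a /\ b <= 0) \/ (0 <= a /\ b <= 1).

Definition billiard_like (A : finType) (p q t : A -> R) (f : R -> R) : Prop :=
  is_IET p q t f /\
  (forall a : A, in_one_half (p a) (q a)) /\
  (forall a : A, in_one_half (p a + t a) (q a + t a)) /\
  (exists a b : A, a <> b /\ q a <= 0 /\ q b <= 0) /\
  (exists a b : A, a <> b /\ 0 <= p a /\ 0 <= p b).

Definition modified_keane (A : finType) (p : A -> R) (f : R -> R) : Prop :=
  forall (m : nat) (a b : A), Nat.le 1 m -> p b <> -1 -> p b <> 0 ->
    iter m f (p a) <> p b.

Definition no_periodic_points (f : R -> R) : Prop :=
  forall (x : R) (n : nat), inI x -> Nat.le 1 n -> iter n f x <> x.

From mathcomp Require Import all_boot zify.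
From Stdlib Require Import Reals Lra ClassicalEpsilon.

Set Implicit Arguments.
Unset Strict Implicit.

Local Open Scope R_scope.

(* Suppose x is periodic with period n.  Pushing the whole orbit to the left by
   the smallest distance from an orbit point to the left end of its interval
   keeps every point in its interval, so the orbit of some left endpoint p b is
   periodic too; by the Keane condition p b, and then (going backwards along the
   orbit) every point of its orbit, is -1 or 0.  Now push this orbit to the
   right by the smallest distance e to the right ends: some point lands on a
   right end q a, which is a left endpoint other than -1 and 0 because each half
   of I contains two intervals.  Going backwards from q a, each shifted orbit
   point is either the image of the previous one or the image of a left
   endpoint, so q a is periodic or lies in the forward orbit of a left endpoint;
   both contradict the Keane condition. *)

Lemma exists_argmin_lt (g : nat -> R) (n : nat) : (0 < n)%nat ->
  exists k0, (k0 < n)%nat /\ forall k, (k < n)%nat -> g k0 <= g k.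
Proof.
induction n as [|n IH]; intros Hn; [lia|].
destruct (Nat.eq_dec n 0) as [->|Hn0].
- exists 0%nat; split; [lia|]. intros k Hk. replace k with 0%nat by lia. lra.
- destruct (IH ltac:(lia)) as [k0 [Hk0 Hmin]].
  destruct (Rle_dec (g k0) (g n)) as [Hle|Hgt].
  + exists k0; split; [lia|]. intros k Hk.
    destruct (Nat.eq_dec k n) as [->|Hkn]; [exact Hle| apply Hmin; lia].
  + exists n; split; [lia|]. intros k Hk.
    destruct (Nat.eq_dec k n) as [->|Hkn]; [lra|].
    specialize (Hmin k ltac:(lia)); lra.
Qed.

Lemma backward_induction (P : nat -> Prop) (N : nat) :
  P N -> (forall k, P k.+1 -> P k) -> forall k, (k <= N)%nat -> P k.
Proof.
intros HN Hstep. induction N as [|N IH]; intros k Hk.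
- replace k with 0%nat by lia. exact HN.
- destruct (Nat.eq_dec k N.+1) as [->|Hk']; [exact HN|].
  apply (IH (Hstep N HN)). lia.
Qed.

Lemma exists_other (T : Type) (P : T -> Prop) :
  (exists b c, b <> c /\ P b /\ P c) -> forall a, exists d, d <> a /\ P d.
Proof.
intros [b [c [Hbc [Hb Hc]]]] a.
destruct (classic (b = a)) as [<-|Hba].
- exists c. split; [congruence| exact Hc].
- exists b. split; [exact Hba| exact Hb].
Qed.

Lemma iter_chain_or_hit (T : Type) (f : T -> T) (P : T -> Prop) (w : nat -> T)
    (n : nat) :
  (forall j, (j < n)%nat -> f (w j) = w j.+1 \/ exists y, P y /\ f y = w j.+1) ->
  iter n f (w 0%nat) = w n \/ exists y m, P y /\ (0 < m)%nat /\ iter m f y = w n.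
Proof.
induction n as [|n IH]; intros Hstep; [now left|].
destruct (Hstep n ltac:(lia)) as [Hf|[y [Hy Hfy]]].
- destruct IH as [Hn|[y [m [Hy [Hm Hiter]]]]].
  + intros j Hj. apply Hstep. lia.
  + left. rewrite iterS Hn. exact Hf.
  + right. exists y, m.+1. split; [exact Hy|]. split; [lia|].
    rewrite iterS Hiter. exact Hf.
- right. exists y, 1%nat. split; [exact Hy|]. split; [lia| exact Hfy].
Qed.

Section PeriodicPoint.

Variables (T : Type) (f : T -> T) (n : nat) (x : T).
Hypothesis periodic : iter n f x = x.

Lemma iter_periodic_mul (k : nat) : iter (k * n) f x = x.
Proof. rewrite iterM. apply iter_fix, periodic. Qed.

Lemma iter_periodic_mod (k : nat) : iter k f x = iter (k %% n) f x.
Proof. by rewrite {1}(divn_eq k n) addnC iterD iter_periodic_mul. Qed.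

Lemma periodic_argmin (g : T -> R) : (0 < n)%nat ->
  exists k0, forall k, g (iter k0 f x) <= g (iter k f x).
Proof.
intros Hn. destruct (exists_argmin_lt (fun k => g (iter k f x)) Hn) as [k0 [_ Hmin]].
exists k0. intros k. rewrite (iter_periodic_mod k). apply Hmin. by rewrite ltn_mod.
Qed.

End PeriodicPoint.

Section IntervalExchange.

Variables (A : finType) (p q t : A -> R) (f : R -> R).
Hypothesis iet : is_IET p q t f.

Lemma iet_interval_nonempty (a : A) : p a < q a.
Proof. destruct iet as [_ [H _]]. apply H. Qed.

Lemma iet_interval_bounds (a : A) : -1 <= p a /\ q a <= 1.
Proof. destruct iet as [_ [_ [H _]]]. apply H. Qed.

Lemma iet_cover (y : R) : inI y -> exists a, inCO (p a) (q a) y.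
Proof. destruct iet as [_ [_ [_ [H _]]]]. apply H. Qed.

Lemma iet_interval_unique (a b : A) (y : R) :
  inCO (p a) (q a) y -> inCO (p b) (q b) y -> a = b.
Proof. destruct iet as [_ [_ [_ [_ [H _]]]]]. apply H. Qed.

Lemma iet_translation (a : A) (y : R) : inCO (p a) (q a) y -> f y = y + t a.
Proof. destruct iet as [_ [_ [_ [_ [_ [H _]]]]]]. apply H. Qed.

Lemma iet_maps_into (y : R) : inI y -> inI (f y).
Proof. destruct iet as [_ [_ [_ [_ [_ [_ [H _]]]]]]]. apply H. Qed.

Lemma iet_injective (y z : R) : inI y -> inI z -> f y = f z -> y = z.
Proof. destruct iet as [_ [_ [_ [_ [_ [_ [_ [H _]]]]]]]]. apply H. Qed.

Lemma iet_surjective (y : R) : inI y -> exists z, inI z /\ f z = y.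
Proof. destruct iet as [_ [_ [_ [_ [_ [_ [_ [_ H]]]]]]]]. apply H. Qed.

Lemma inCO_inI (a : A) (y : R) : inCO (p a) (q a) y -> inI y.
Proof. intros [H1 H2]. destruct (iet_interval_bounds a). unfold inI; lra. Qed.

Lemma iter_inI (k : nat) (y : R) : inI y -> inI (iter k f y).
Proof. intros Hy. induction k as [|k IH]; [exact Hy| apply iet_maps_into, IH]. Qed.

Lemma exists_interval_index :
  exists idx : R -> A, forall y, inI y -> inCO (p (idx y)) (q (idx y)) y.
Proof.
destruct (iet_cover (y := 0) ltac:(unfold inI; lra)) as [a0 _].
exists (fun y => epsilon (inhabits a0) (fun a => inCO (p a) (q a) y)).
intros y Hy. apply (epsilon_spec (inhabits a0) (fun a => inCO (p a) (q a) y)).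
now apply iet_cover.
Qed.

Lemma iet_interval_order (a b : A) : a <> b -> p a <= p b -> q a <= p b.
Proof.
intros Hab Hp. destruct (Rle_dec (q a) (p b)) as [H|H]; [exact H|].
exfalso. apply Hab, (iet_interval_unique (y := p b)); unfold inCO;
  pose proof (iet_interval_nonempty b); lra.
Qed.

Lemma right_end_is_left_end (a : A) : q a < 1 -> exists c, p c = q a.
Proof.
intros Hq. pose proof (iet_interval_nonempty a) as Ha. pose proof (iet_interval_bounds a).
destruct (iet_cover (y := q a) ltac:(unfold inI; lra)) as [c Hc].
exists c. destruct (classic (c = a)) as [->|Hca].
- destruct Hc; lra.
- pose proof (iet_interval_nonempty c). destruct Hc.
  destruct (Rle_dec (p a) (p c)) as [Hle|Hgt].
  + pose proof (iet_interval_order (not_eq_sym Hca) Hle). lra.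
  + pose proof (iet_interval_order Hca ltac:(lra)). lra.
Qed.

(* The minimal distance d to the left ends can be subtracted from every orbit
   point without leaving its interval, so f commutes with [- d] along the orbit. *)
Lemma periodic_left_endpoint (x : R) (n : nat) :
  inI x -> (0 < n)%nat -> iter n f x = x -> exists b, iter n f (p b) = p b.
Proof.
intros Hx Hn Hper.
destruct exists_interval_index as [idx Hidx].
destruct (periodic_argmin Hper (fun y => y - p (idx y)) Hn) as [k0 Hmin].
set (d := iter k0 f x - p (idx (iter k0 f x))).
assert (Hshift : forall k, iter k f (x - d) = iter k f x - d).
{ induction k as [|k IH]; [reflexivity|].
  rewrite !iterS IH.
  pose proof (Hidx _ (iter_inI k Hx)) as [H1 H2].
  pose proof (Hidx _ (iter_inI k0 Hx)) as [H3 H4].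
  specialize (Hmin k).
  rewrite (iet_translation (y := iter k f x - d) (a := idx (iter k f x)));
    [| unfold inCO, d in *; lra].
  rewrite (iet_translation (Hidx _ (iter_inI k Hx))). lra. }
exists (idx (iter k0 f x)).
replace (p (idx (iter k0 f x))) with (iter k0 f (x - d)) by (rewrite Hshift; unfold d; lra).
by rewrite -iterD Hshift addnC iterD Hper -Hshift.
Qed.

(* The translation f (x + e') = y + e' for 0 <= e' < e is inherited by every
   point just left of a preimage u of y + e, unless u is a left endpoint. *)
Lemma iet_preimage_left_limit (x y e u : R) : 0 < e ->
  (forall e', 0 <= e' < e -> inI (x + e') /\ f (x + e') = y + e') ->
  inI u -> f u = y + e -> u = x + e \/ exists c, u = p c.
Proof.
intros He Hshift Hu Hfu.
destruct (iet_cover Hu) as [c Hc].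
destruct (Req_dec u (p c)) as [E|E]; [right; now exists c|left].
set (eps := Rmin (u - p c) e).
assert (Heps : 0 < eps <= e /\ eps <= u - p c)
  by (unfold eps, Rmin; destruct Hc; destruct (Rle_dec (u - p c) e); lra).
assert (Hc' : inCO (p c) (q c) (u - eps)) by (destruct Hc; unfold inCO; lra).
destruct (Hshift (e - eps) ltac:(lra)) as [HI Hf].
assert (Heq : u - eps = x + (e - eps)).
{ apply iet_injective; [exact (inCO_inI Hc')| exact HI|].
  rewrite Hf (iet_translation Hc'). rewrite (iet_translation Hc) in Hfu. lra. }
lra.
Qed.

Lemma periodic_orbit_right_end (y : R) (n : nat) :
  inI y -> (0 < n)%nat -> iter n f y = y ->
  (forall k a, inCO (p a) (q a) (iter k f y) -> q a < 1) ->
  exists a k, inCO (p a) (q a) (iter k f y) /\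
    (iter n f (q a) = q a \/ exists c m, (0 < m)%nat /\ iter m f (p c) = q a).
Proof.
intros Hy Hn Hper Hq1.
destruct exists_interval_index as [idx Hidx].
set (z k := iter k f y).
assert (HzI : forall k, inI (z k)) by (intro k; apply iter_inI, Hy).
destruct (periodic_argmin Hper (fun u => q (idx u) - u) Hn) as [k1 Hmin].
set (a := idx (z k1)). set (e := q a - z k1).
assert (He : 0 < e) by (pose proof (Hidx _ (HzI k1)) as [_ H]; unfold e, a; lra).
assert (Hgap : forall k, z k + e <= q (idx (z k)))
  by (intro k; specialize (Hmin k); unfold e, a, z in *; lra).
assert (Hshift : forall k e', 0 <= e' < e ->
                   inI (z k + e') /\ f (z k + e') = z k.+1 + e').
{ intros k e' He'. pose proof (Hidx _ (HzI k)) as Hk.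
  assert (Hk' : inCO (p (idx (z k))) (q (idx (z k))) (z k + e'))
    by (specialize (Hgap k); destruct Hk; unfold inCO; lra).
  split; [exact (inCO_inI Hk')|].
  change (z k.+1) with (f (z k)). rewrite (iet_translation Hk') (iet_translation Hk). lra. }
set (w j := z (k1 + j)%nat + e).
assert (Hstep : forall j,
          f (w j) = w j.+1 \/ exists u, (exists c, u = p c) /\ f u = w j.+1).
{ intros j.
  assert (Hw : inI (w j.+1)).
  { pose proof (Hq1 _ _ (Hidx _ (HzI (k1 + j.+1)%nat))). specialize (Hgap (k1 + j.+1)%nat).
    pose proof (HzI (k1 + j.+1)%nat). unfold w, inI in *. lra. }
  destruct (iet_surjective Hw) as [u [Hu Hfu]].
  assert (Hw' : w j.+1 = z (k1 + j)%nat.+1 + e) by (unfold w; by rewrite addnS).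
  rewrite Hw' in Hfu.
  destruct (iet_preimage_left_limit He (Hshift (k1 + j)%nat) Hu Hfu) as [->|Hc].
  - left. now rewrite Hw'.
  - right. exists u. split; [exact Hc| congruence]. }
assert (Hw0 : w 0%nat = q a) by (unfold w, e; rewrite addn0; lra).
assert (Hwn : w n = q a) by (unfold w, e, z; rewrite iterD Hper; lra).
exists a, k1. split; [exact (Hidx _ (HzI k1))|].
destruct (iter_chain_or_hit (n := n) (fun j _ => Hstep j)) as [H|[u [m [[c ->] [Hm H]]]]].
- left. by rewrite -{1}Hw0 -Hwn.
- right. exists c, m. split; [exact Hm| by rewrite -Hwn].
Qed.

End IntervalExchange.

Section BilliardLike.

Variables (A : finType) (p q t : A -> R) (f : R -> R).
Hypothesis billiard : billiard_like p q t f.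

Lemma billiard_iet : is_IET p q t f.
Proof. apply billiard. Qed.

Lemma half_start_interval_end (a : A) (z : R) :
  (z = -1 \/ z = 0) -> inCO (p a) (q a) z -> q a <> 0 /\ q a < 1.
Proof.
destruct billiard as [iet [Hhalf [_ [Hleft Hright]]]].
pose proof (iet_interval_bounds iet a). intros [-> | ->] [Hz1 Hz2].
- destruct (exists_other Hleft a) as [d [Hda Hd]].
  pose proof (iet_interval_nonempty iet d). pose proof (iet_interval_bounds iet d).
  pose proof (iet_interval_order iet (not_eq_sym Hda) ltac:(lra)). lra.
- destruct (Hhalf a) as [Hneg|Hpos]; [lra|].
  destruct (exists_other Hright a) as [d [Hda Hd]].
  pose proof (iet_interval_nonempty iet d). pose proof (iet_interval_bounds iet d).
  pose proof (iet_interval_order iet (not_eq_sym Hda) ltac:(lra)). lra.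
Qed.

Lemma half_start_preimage (a : A) (y : R) :
  inCO (p a) (q a) y -> (f y = -1 \/ f y = 0) -> p a = y.
Proof.
destruct billiard as [iet [_ [Himage _]]]. intros Hy.
rewrite (iet_translation iet Hy). destruct Hy.
destruct (Himage a) as [[H1 H2]|[H1 H2]]; intros [E|E]; lra.
Qed.

Hypothesis keane : modified_keane p f.

(* By the Keane condition, a periodic left endpoint is -1 or 0; an orbit point
   mapped to -1 or 0 is a left endpoint, hence again -1 or 0. *)
Lemma periodic_half_start_orbit (b : A) (n : nat) :
  (0 < n)%nat -> iter n f (p b) = p b ->
  forall k, iter k f (p b) = -1 \/ iter k f (p b) = 0.
Proof.
intros Hn Hper. pose proof billiard_iet as iet.
assert (Hb : p b = -1 \/ p b = 0).
{ destruct (Req_dec (p b) (-1)) as [E|E]; [now left|].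
  destruct (Req_dec (p b) 0) as [E'|E']; [now right|].
  exfalso. apply (@keane n b b); [by apply/leP| exact E| exact E'| exact Hper]. }
assert (HbI : inI (p b)) by (unfold inI; destruct Hb; lra).
assert (Hstep : forall k, iter k.+1 f (p b) = -1 \/ iter k.+1 f (p b) = 0 ->
                          iter k f (p b) = -1 \/ iter k f (p b) = 0).
{ intros k Hk. destruct (iet_cover iet (iter_inI iet k HbI)) as [a Ha].
  rewrite iterS in Hk. pose proof (half_start_preimage Ha Hk) as Hpa.
  destruct k as [|k]; [exact Hb|].
  destruct (Req_dec (p a) (-1)) as [E|E]; [left; congruence|].
  destruct (Req_dec (p a) 0) as [E'|E']; [right; congruence|].
  exfalso. apply (@keane k.+1 b a); [by apply/leP| exact E| exact E'| congruence]. }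
intros k.
apply (@backward_induction (fun k => iter k f (p b) = -1 \/ iter k f (p b) = 0) (k * n));
  [| exact Hstep| nia].
by rewrite iter_periodic_mul.
Qed.

End BilliardLike.

Theorem lemma8p3 (A : finType) (p q t : A -> R) (f : R -> R) :
  billiard_like p q t f -> modified_keane p f -> no_periodic_points f.
Proof.
intros billiard keane x n Hx Hn Hper.
pose proof (billiard_iet billiard) as iet.
assert (Hn' : (0 < n)%nat) by (by apply/leP).
destruct (periodic_left_endpoint iet Hx Hn' Hper) as [b Hb].
pose proof (periodic_half_start_orbit billiard keane Hn' Hb) as Horbit.
assert (HbI : inI (p b)) by (unfold inI; destruct (Horbit 0%nat); simpl in *; lra).
destruct (periodic_orbit_right_end iet HbI Hn' Hb
            (fun k a Ha => proj2 (half_start_interval_end billiard (Horbit k) Ha)))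
  as [a [k [Ha Hend]]].
destruct (half_start_interval_end billiard (Horbit k) Ha) as [Hq0 Hq1].
destruct (right_end_is_left_end iet Hq1) as [c Hc].
assert (Hc1 : p c <> -1)
  by (pose proof (iet_interval_nonempty iet a); pose proof (iet_interval_bounds iet a);
      lra).
rewrite -Hc in Hq0, Hend.
destruct Hend as [Hfix|[c' [m [Hm Hhit]]]].
- apply (keane n c c Hn); assumption.
- apply (keane m c' c); [by apply/leP| assumption..].
Qed.
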